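(* Let $F$ be real-analytic and $L$-periodic. For each $j=1,2,\dots$ there exists a number $b_j<\infty$, not depending on $N$ (it may depend on $j$, $F$ and $L$), such that for every $N\ge 2$ and every $i\in\{1,\dots,N\}$, $$|c_{ij}^{(N)}|<b_j\,N^{\frac{j-1}{2}}.$$
   Context: Fix $L>0$ and an $L$-periodic function $F:\mathbb R\to\mathbb R$ (an external force on the circle $S_L=\mathbb R/L\mathbb Z$). For an integer $N\ge2$ consider $N$ particles with lifted positions $x_1(t)<\dots<x_N(t)<x_1(t)+L$, extended periodically by $x_{i+N}(t)=x_i(t)+L$ (indices taken cyclically). They obey $$\frac{d^2x_i}{dt^2}=\frac{1}{(x_i-x_{i-1})^2}-\frac{1}{(x_{i+1}-x_i)^2}+F(x_i),\qquad i=1,\dots,N,$$ i.e. nearest-neighbour Coulomb repulsion with force $f(r)=r^{-2}$, with initial conditions $x_i(0)=(i-1)L/N$ (so all gaps equal $\Delta=L/N$) and $\dot x_i(0)=0$. Let $v_i=\dot x_i$. For analytic $F$ the solution is analytic near $t=0$ and $v_i(t)=\sum_{j\ge1}c_{ij}t^j$ with $c_{ij}=c_{ij}^{(N)}=v_i^{(j)}(0)/j!$. *)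

From Stdlib Require Import Reals Lra Lia Arith Factorial.
Open Scope R_scope.

Definition real_analytic (F : R -> R) : Prop :=
  forall x0 : R, exists r : R, 0 < r /\ exists a : nat -> R,
    forall x : R, Rabs (x - x0) < r -> Pser a (x - x0) (F x).

Definition periodic (L : R) (F : R -> R) : Prop := forall x : R, F (x + L) = F x.

(* Particles are indexed 0..N-1 (paper: 1..N).  D k i t is the k-th time
   derivative of the (lifted) position x_i at time t; D 0 i = x_i. *)

Definition left_gap (N : nat) (L : R) (x : nat -> R) (i : nat) : R :=
  match i with
  | O => x O - (x (N - 1)%nat - L)
  | S k => x i - x k
  end.

Definition right_gap (N : nat) (L : R) (x : nat -> R) (i : nat) : R :=
  if Nat.eqb (S i) N then (x O + L) - x i else x (S i) - x i.

(* D is a smooth solution on (-eps, eps) of the Coulomb N-particle system with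
   external force F on the circle of length L, started at equal spacing L/N
   with zero velocities. *)
Definition is_solution (N : nat) (L : R) (F : R -> R) (eps : R)
    (D : nat -> nat -> R -> R) : Prop :=
  0 < eps /\
  (forall (k i : nat) (t : R), (i < N)%nat -> -eps < t < eps ->
      derivable_pt_lim (D k i) t (D (S k) i t)) /\
  (forall (i : nat) (t : R), (i < N)%nat -> -eps < t < eps ->
      0 < right_gap N L (fun m => D O m t) i) /\
  (forall (i : nat) (t : R), (i < N)%nat -> -eps < t < eps ->
      D 2%nat i t =
        / (left_gap N L (fun m => D O m t) i) ^ 2
        - / (right_gap N L (fun m => D O m t) i) ^ 2
        + F (D O i t)) /\
  (forall i : nat, (i < N)%nat -> D O i 0 = INR i * L / INR N) /\
  (forall i : nat, (i < N)%nat -> D 1%nat i 0 = 0).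

(* c_{ij} = v_i^{(j)}(0)/j! = x_i^{(j+1)}(0)/j! *)
Definition coeff (D : nat -> nat -> R -> R) (i j : nat) : R :=
  D (S j) i 0 / INR (fact j).

From Stdlib Require Import Reals Lra Lia Arith ZArith.
From Stdlib Require Import FunctionalExtensionality IndefiniteDescription.
From Coquelicot Require Import Coquelicot.
Open Scope R_scope.

(* Differentiate the equations of motion at t = 0 and track,
   besides the size of each time derivative, its regularity in the particle
   index i: a sequence a_i is "P-smooth of size B at scale n" (dsmooth) when
   its forward differences of order p <= P are bounded by B / n^p, as samples
   of a smooth function on a grid of mesh 1/n would be.  By strong induction
   on the order m we show that x_i^(m)(0) (m >= 1) is P-smooth of size
   n^(m/2 - 1) for every P, with constants independent of N:
   - gaps x_(i+1) - x_i are differences, hence gain a factor 1/n;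
   - gap^2 and the repulsion 1/gap^2 are handled by the Leibniz rule, in which
     orders (and sizes n^(a/2 - 1)) add, and products of P-smooth sequences
     stay P-smooth;
   - the external force F(x_i(t)) is differentiated by the chain rule; at
     order 0 it samples the bounded periodic derivatives of F on a grid;
   - the equation x'' = 1/gap_(i-1)^2 - 1/gap_i^2 + F(x_i) then expresses
     x^(m+2) as a difference of repulsions (one more factor 1/n) plus force. *)

Fixpoint binom (n k : nat) : R :=
  match n, k with
  | _, O => 1
  | O, S _ => 0
  | S n', S k' => binom n' k' + binom n' (S k')
  end.

Lemma binom_big n k : (n < k)%nat -> binom n k = 0.
Proof.
  revert k; induction n; intros k Hk; destruct k; simpl; try lia; auto.
  rewrite !IHn by lia; ring.
Qed.

Lemma binom_n0 n : binom n 0 = 1.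
Proof. now destruct n. Qed.

(* Pascal's rule in summed form: the inductive step of the Leibniz formula
   for the (k+1)-th derivative of a product. *)
Lemma leibniz_step (A B : nat -> R) (k : nat) :
  sum_f_R0 (fun s => binom (S k) s * A s * B (S k - s)%nat) (S k) =
  sum_f_R0 (fun s => binom k s * (A (S s) * B (k - s)%nat + A s * B (S k - s)%nat)) k.
Proof.
  assert (Hlast : sum_f_R0 (fun s => binom k s * A s * B (S k - s)%nat) (S k) =
                  sum_f_R0 (fun s => binom k s * A s * B (S k - s)%nat) k).
  { rewrite tech5, binom_big by lia; ring. }
  transitivity (sum_f_R0 (fun s => binom k s * A (S s) * B (k - s)%nat) k +
                sum_f_R0 (fun s => binom k s * A s * B (S k - s)%nat) (S k)).
  - rewrite !(decomp_sum _ (S k)) by lia; simpl pred.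
    replace (sum_f_R0 (fun i => binom (S k) (S i) * A (S i) * B (S k - S i)%nat) k)
      with (sum_f_R0 (fun s => binom k s * A (S s) * B (k - s)%nat) k +
            sum_f_R0 (fun i => binom k (S i) * A (S i) * B (S k - S i)%nat) k)
      by (rewrite <- sum_plus; apply sum_eq; intros s _; simpl; ring).
    rewrite !binom_n0; ring.
  - rewrite Hlast, <- sum_plus; apply sum_eq; intros s _; ring.
Qed.

Lemma binom_ge0 n k : 0 <= binom n k.
Proof.
  revert k; induction n as [|n IH]; destruct k; simpl; try lra.
  pose proof (IH k); pose proof (IH (S k)); lra.
Qed.

Lemma binom_row_sum m : sum_f_R0 (binom m) m = 2 ^ m.
Proof.
  induction m as [|m IH]; [simpl; auto|].
  pose proof (leibniz_step (fun _ => 1) (fun _ => 1) m) as H; cbv beta in H.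
  transitivity (sum_f_R0 (fun s => binom (S m) s * 1 * 1) (S m)).
  { apply sum_eq; intros; ring. }
  rewrite H; transitivity (2 * sum_f_R0 (binom m) m).
  - rewrite scal_sum; apply sum_eq; intros; ring.
  - rewrite IH; simpl; ring.
Qed.

Definition inI (e t : R) : Prop := - e < t < e.

Lemma locally_inI (e t : R) (P : R -> Prop) :
  inI e t -> (forall y, inI e y -> P y) -> locally t P.
Proof.
  intros Ht HP.
  assert (Hpos : 0 < Rmin (t + e) (e - t)) by (unfold inI in Ht; apply Rmin_pos; lra).
  exists (mkposreal _ Hpos); intros y Hy; apply HP.
  change (Rabs (y - t) < Rmin (t + e) (e - t)) in Hy.
  apply Rabs_def2 in Hy.
  pose proof (Rmin_l (t + e) (e - t)); pose proof (Rmin_r (t + e) (e - t)).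
  unfold inI in *; lra.
Qed.

Lemma derivable_pt_lim_ext_inI (e : R) (f g : R -> R) (t l : R) :
  (forall y, inI e y -> f y = g y) -> inI e t ->
  derivable_pt_lim f t l -> derivable_pt_lim g t l.
Proof.
  intros Hfg Ht Hf; apply is_derive_Reals; apply is_derive_Reals in Hf.
  apply (is_derive_ext_loc f g); auto; apply (locally_inI e); auto.
Qed.

Lemma Derive_n_ext_inI (e : R) (f g : R -> R) (k : nat) (t : R) :
  (forall y, inI e y -> f y = g y) -> inI e t -> Derive_n f k t = Derive_n g k t.
Proof. intros Hfg Ht; apply Derive_n_ext_loc, (locally_inI e); auto. Qed.

Definition deriv_chain (e : R) (n : nat) (U : nat -> R -> R) : Prop :=
  forall k t, (k < n)%nat -> inI e t -> derivable_pt_lim (U k) t (U (S k) t).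

Definition leibniz (U V : nat -> R -> R) (k : nat) (t : R) : R :=
  sum_f_R0 (fun s => binom k s * U s t * V (k - s)%nat t) k.

Lemma derivable_pt_lim_sum (f f' : nat -> R -> R) (n : nat) (t : R) :
  (forall s, (s <= n)%nat -> derivable_pt_lim (f s) t (f' s t)) ->
  derivable_pt_lim (fun x => sum_f_R0 (fun s => f s x) n) t (sum_f_R0 (fun s => f' s t) n).
Proof.
  induction n as [|n IH]; intros H; simpl.
  - apply H; lia.
  - apply (derivable_pt_lim_plus (fun x => sum_f_R0 (fun s => f s x) n) (f (S n))).
    + apply IH; intros; apply H; lia.
    + apply H; lia.
Qed.

Lemma deriv_chain_leibniz (e : R) (n : nat) (U V : nat -> R -> R) :
  deriv_chain e n U -> deriv_chain e n V -> deriv_chain e n (leibniz U V).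
Proof.
  intros HU HV k t Hk Ht; unfold leibniz.
  rewrite (leibniz_step (fun s => U s t) (fun s => V s t)).
  apply (derivable_pt_lim_sum (fun s x => binom k s * U s x * V (k - s)%nat x)
    (fun s x => binom k s * (U (S s) x * V (k - s)%nat x + U s x * V (S k - s)%nat x))).
  intros s Hs.
  replace (S k - s)%nat with (S (k - s)) by lia.
  replace (fun x => binom k s * U s x * V (k - s)%nat x)
    with (mult_real_fct (binom k s) (fun x => U s x * V (k - s)%nat x))
    by (apply functional_extensionality; intros; unfold mult_real_fct; ring).
  apply derivable_pt_lim_scal, (derivable_pt_lim_mult (U s) (V (k - s)%nat));
    [apply HU | apply HV]; auto; lia.
Qed.

Definition Cn (e : R) (n : nat) (f : R -> R) : Prop :=
  exists U : nat -> R -> R, (forall t, U O t = f t) /\ deriv_chain e n U.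

Lemma Cn_0 (e : R) (f : R -> R) : Cn e 0 f.
Proof. exists (fun _ => f); split; auto; intros k t Hk; lia. Qed.

Lemma Cn_S (e : R) (n : nat) (f f' : R -> R) :
  (forall t, inI e t -> derivable_pt_lim f t (f' t)) -> Cn e n f' -> Cn e (S n) f.
Proof.
  intros Hd [V [HV0 HV]].
  exists (fun k => match k with O => f | S k' => V k' end); split; auto.
  intros [|k] t Hk Ht.
  - rewrite HV0; auto.
  - apply HV; auto; lia.
Qed.

Lemma Cn_pred (e : R) (n : nat) (f : R -> R) : Cn e (S n) f -> Cn e n f.
Proof. intros [U [H0 H]]; exists U; split; auto; intros k t Hk Ht; apply H; auto; lia. Qed.

Lemma Cn_deriv (e : R) (n : nat) (f : R -> R) : Cn e (S n) f ->
  exists f', (forall t, inI e t -> derivable_pt_lim f t (f' t)) /\ Cn e n f'.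
Proof.
  intros [U [H0 H]]; exists (U 1%nat); split.
  - intros t Ht; apply (derivable_pt_lim_ext_inI e (U 0%nat)); auto; apply H; auto; lia.
  - exists (fun k => U (S k)); split; auto; intros k t Hk Ht; apply H; auto; lia.
Qed.

Lemma Cn_mult (e : R) (n : nat) (f g : R -> R) :
  Cn e n f -> Cn e n g -> Cn e n (fun t => f t * g t).
Proof.
  intros [U [HU0 HU]] [V [HV0 HV]]; exists (leibniz U V); split.
  - intros t; unfold leibniz; simpl; rewrite HU0, HV0; ring.
  - apply deriv_chain_leibniz; auto.
Qed.

Lemma Cn_plus (e : R) (n : nat) (f g : R -> R) :
  Cn e n f -> Cn e n g -> Cn e n (fun t => f t + g t).
Proof.
  intros [U [HU0 HU]] [V [HV0 HV]]; exists (fun k t => U k t + V k t); split.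
  - intros t; rewrite HU0, HV0; auto.
  - intros k t Hk Ht; apply (derivable_pt_lim_plus (U k) (V k)); auto.
Qed.

Lemma Cn_minus (e : R) (n : nat) (f g : R -> R) :
  Cn e n f -> Cn e n g -> Cn e n (fun t => f t - g t).
Proof.
  intros [U [HU0 HU]] [V [HV0 HV]]; exists (fun k t => U k t - V k t); split.
  - intros t; rewrite HU0, HV0; auto.
  - intros k t Hk Ht; apply (derivable_pt_lim_minus (U k) (V k)); auto.
Qed.

Lemma Cn_scal (e : R) (n : nat) (c : R) (f : R -> R) : Cn e n f -> Cn e n (fun t => c * f t).
Proof.
  intros [U [HU0 HU]]; exists (fun k t => c * U k t); split.
  - intros t; rewrite HU0; auto.
  - intros k t Hk Ht; apply (derivable_pt_lim_scal (U k)); auto.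
Qed.

Lemma Cn_const (e : R) (n : nat) (c : R) : Cn e n (fun _ => c).
Proof.
  exists (fun k _ => match k with O => c | _ => 0 end); split; auto.
  intros [|k] t Hk Ht; apply derivable_pt_lim_const.
Qed.

(* (1/f)' = -f' (1/f)(1/f), so 1/f is as smooth as a non-vanishing f. *)
Lemma Cn_inv (e : R) (n : nat) (f : R -> R) :
  (forall t, inI e t -> f t <> 0) -> Cn e n f -> Cn e n (fun t => / f t).
Proof.
  revert f; induction n as [|n IH]; intros f Hnz Hf; [apply Cn_0|].
  destruct (Cn_deriv _ _ _ Hf) as [f' [Hd Hf']].
  apply (Cn_S e n _ (fun t => -1 * (f' t * (/ f t * / f t)))).
  - intros t Ht.
    replace (fun t0 => / f t0) with (div_fct (fct_cte 1) f)
      by (apply functional_extensionality; intros; unfold div_fct, fct_cte, Rdiv; ring).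
    replace (-1 * (f' t * (/ f t * / f t))) with ((0 * f t - f' t * fct_cte 1 t) / Rsqr (f t))
      by (unfold fct_cte, Rsqr; field; apply Hnz; auto).
    apply derivable_pt_lim_div; [apply derivable_pt_lim_const | apply Hd | apply Hnz]; auto.
  - apply Cn_scal, Cn_mult; auto.
    apply Cn_mult; apply IH; auto; apply Cn_pred; auto.
Qed.

Lemma Cn_comp (e : R) (n : nat) (G : nat -> R -> R) (g : R -> R) :
  (forall q x, derivable_pt_lim (G q) x (G (S q) x)) ->
  Cn e n g -> forall q, Cn e n (fun t => G q (g t)).
Proof.
  revert g; induction n as [|n IH]; intros g HG Hg q; [apply Cn_0|].
  destruct (Cn_deriv _ _ _ Hg) as [g' [Hd Hg']].
  apply (Cn_S e n _ (fun t => G (S q) (g t) * g' t)).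
  - intros t Ht; apply (derivable_pt_lim_comp g (G q)); auto.
  - apply Cn_mult; auto; apply IH; auto; apply Cn_pred; auto.
Qed.

Definition Cinf (e : R) (f : R -> R) : Prop := forall n, Cn e n f.

Lemma Derive_n_chain (e : R) (n : nat) (U : nat -> R -> R) (f : R -> R) :
  (forall t, U O t = f t) -> deriv_chain e n U ->
  forall k t, (k <= n)%nat -> inI e t -> Derive_n f k t = U k t.
Proof.
  intros H0 H; induction k as [|k IH]; intros t Hk Ht; simpl; auto.
  transitivity (Derive (U k) t).
  - apply Derive_ext_loc, (locally_inI e); auto; intros; apply IH; auto; lia.
  - apply is_derive_unique, is_derive_Reals, H; auto.
Qed.

Lemma Cinf_deriv_chain (e : R) (f : R -> R) : Cinf e f -> forall n, deriv_chain e n (Derive_n f).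
Proof.
  intros Hf n k t Hk Ht.
  destruct (Hf (S k)) as [U [H0 H]].
  rewrite (Derive_n_chain e (S k) U f H0 H (S k)); auto.
  apply (derivable_pt_lim_ext_inI e (U k)); auto.
  intros; symmetry; apply (Derive_n_chain e (S k) U f); auto.
Qed.

Lemma Derive_n_plus_inI (e : R) (f g : R -> R) (k : nat) (t : R) :
  Cinf e f -> Cinf e g -> inI e t ->
  Derive_n (fun y => f y + g y) k t = Derive_n f k t + Derive_n g k t.
Proof.
  intros Hf Hg Ht.
  apply (Derive_n_chain e (S k) (fun k y => Derive_n f k y + Derive_n g k y)); auto.
  intros k' y Hk Hy; apply (derivable_pt_lim_plus (Derive_n f k') (Derive_n g k'));
    [apply (Cinf_deriv_chain e f Hf (S k)) | apply (Cinf_deriv_chain e g Hg (S k))]; auto.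
Qed.

Lemma Derive_n_minus_inI (e : R) (f g : R -> R) (k : nat) (t : R) :
  Cinf e f -> Cinf e g -> inI e t ->
  Derive_n (fun y => f y - g y) k t = Derive_n f k t - Derive_n g k t.
Proof.
  intros Hf Hg Ht.
  apply (Derive_n_chain e (S k) (fun k y => Derive_n f k y - Derive_n g k y)); auto.
  intros k' y Hk Hy; apply (derivable_pt_lim_minus (Derive_n f k') (Derive_n g k'));
    [apply (Cinf_deriv_chain e f Hf (S k)) | apply (Cinf_deriv_chain e g Hg (S k))]; auto.
Qed.

Lemma Derive_n_mult_inI (e : R) (f g : R -> R) (k : nat) (t : R) :
  Cinf e f -> Cinf e g -> inI e t ->
  Derive_n (fun y => f y * g y) k t =
  sum_f_R0 (fun s => binom k s * Derive_n f s t * Derive_n g (k - s)%nat t) k.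
Proof.
  intros Hf Hg Ht.
  apply (Derive_n_chain e (S k) (leibniz (Derive_n f) (Derive_n g))); auto.
  - intros; unfold leibniz; simpl; ring.
  - apply deriv_chain_leibniz; apply Cinf_deriv_chain; auto.
Qed.

Lemma Cinf_of_chain (e : R) (U : nat -> R -> R) : (forall n, deriv_chain e n U) -> Cinf e (U O).
Proof. intros H n; exists U; split; auto. Qed.

Lemma Pser_radius (a : nat -> R) (r : R) (F : R -> R) (x0 : R) :
  0 < r -> (forall x, Rabs (x - x0) < r -> Pser a (x - x0) (F x)) ->
  forall z, Rabs z < r -> Rbar_lt (Rabs z) (CV_radius a).
Proof.
  intros Hr Ha z Hz.
  set (rho := (Rabs z + r) / 2).
  assert (Hrho : 0 <= rho /\ Rabs z < rho /\ rho < r) by (pose proof (Rabs_pos z); unfold rho; lra).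
  assert (HP : Pser a rho (F (x0 + rho))).
  { replace rho with (x0 + rho - x0) at 1 by ring; apply Ha.
    replace (x0 + rho - x0) with rho by ring; rewrite Rabs_pos_eq; lra. }
  apply is_series_Reals in HP.
  assert (Hl : is_lim_seq (fun n => a n * rho ^ n) 0) by (apply ex_series_lim_0; eexists; eauto).
  destruct (filterlim_bounded (fun n => a n * rho ^ n)) as [M HM]; [exists 0; apply Hl|].
  assert (Hle : Rbar_le rho (CV_radius a))
    by (apply (proj1 (CV_radius_bounded a)); exists M; intros n; apply (HM n)).
  apply Rbar_lt_le_trans with rho; auto; simpl; lra.
Qed.

Lemma analytic_deriv_chain (F : R -> R) : real_analytic F ->
  forall q x, derivable_pt_lim (Derive_n F q) x (Derive_n F (S q) x).
Proof.
  intros Han q x.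
  apply is_derive_Reals; simpl; apply Derive_correct.
  destruct (Han x) as [r [Hr [a Ha]]].
  pose proof (Pser_radius a r F x Hr Ha) as HCV.
  set (G := fun y => PSeries a (y + - x)).
  assert (HFG : forall y, Rabs (y - x) < r -> F y = G y)
    by (intros y Hy; symmetry; apply is_pseries_unique, is_pseries_Reals, Ha; auto).
  apply (ex_derive_ext_loc (fun y => PSeries (PS_derive_n q a) (y + - x))).
  - assert (Hr2 : 0 < r / 2) by lra.
    exists (mkposreal _ Hr2); intros y Hy; change (Rabs (y - x) < r / 2) in Hy.
    transitivity (Derive_n G q y).
    + unfold G; rewrite Derive_n_comp_trans, Derive_n_PSeries; auto.
      apply HCV; change (Rabs (y - x) < r); lra.
    + symmetry; apply Derive_n_ext_loc; exists (mkposreal _ Hr2); intros t Ht.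
      change (Rabs (t - y) < r / 2) in Ht; apply HFG.
      replace (t - x) with ((t - y) + (y - x)) by ring.
      eapply Rle_lt_trans; [apply Rabs_triang | lra].
  - apply (ex_derive_comp (PSeries (PS_derive_n q a)) (fun y => y + - x)).
    + apply ex_derive_PSeries; rewrite CV_radius_derive_n.
      replace (x + - x) with 0 by ring; apply HCV; rewrite Rabs_R0; auto.
    + auto_derive; auto.
Qed.

Lemma periodic_derive (f f' : R -> R) (L : R) : periodic L f ->
  (forall x, derivable_pt_lim f x (f' x)) -> periodic L f'.
Proof.
  intros Hp Hd x.
  assert (H1 : derivable_pt_lim (fun y => f (y + L)) x (f' (x + L) * 1)).
  { apply (derivable_pt_lim_comp (fun y => y + L) f); [|apply Hd].
    replace 1 with (1 + 0) by ring.
    apply derivable_pt_lim_plus; [apply derivable_pt_lim_id | apply derivable_pt_lim_const]. }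
  rewrite Rmult_1_r in H1.
  assert (Hf : (fun y => f (y + L)) = f) by (apply functional_extensionality; intros; apply Hp).
  rewrite Hf in H1; eapply uniqueness_limite; eauto.
Qed.

Lemma periodic_Z (f : R -> R) (L : R) : periodic L f ->
  forall (k : Z) (x : R), f (x + IZR k * L) = f x.
Proof.
  intros Hp k; induction k as [|k IH|k IH] using Z.peano_ind; intros x.
  - f_equal; ring.
  - rewrite succ_IZR, <- (IH x), <- (Hp (x + IZR k * L)); f_equal; ring.
  - rewrite <- Z.sub_1_r, <- (IH x), minus_IZR, <- (Hp (x + (IZR k - 1) * L)); f_equal; ring.
Qed.

(* A continuous periodic function is bounded: it takes all its values on [0, L]. *)
Lemma periodic_bounded (f : R -> R) (L : R) : 0 < L -> periodic L f ->
  (forall x, continuity_pt f x) -> exists M, forall x, Rabs (f x) <= M.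
Proof.
  intros HL Hp Hc.
  destruct (continuity_ab_maj (fun x => Rabs (f x)) 0 L) as [xm [Hm _]]; [lra| |].
  { intros c _; apply (continuity_pt_comp f Rabs); auto; apply Rcontinuity_abs. }
  exists (Rabs (f xm)); intros x.
  destruct (archimed (x / L)) as [Hu1 Hu2].
  set (k := (up (x / L) - 1)%Z).
  assert (Hk : IZR k * L <= x <= IZR k * L + L).
  { unfold k; rewrite minus_IZR.
    assert (x = x / L * L) by (field; lra).
    split; nra. }
  assert (Hx : f x = f (x - IZR k * L))
    by (rewrite <- (periodic_Z f L Hp k (x - IZR k * L)); f_equal; ring).
  rewrite Hx; apply Hm; lra.
Qed.

Definition fdiff (a : nat -> R) (i : nat) : R := a (S i) - a i.

(* dsmooth n P a B: the sequences a, fdiff a, ..., fdiff^P a are bounded by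
   B, B/n, ..., B/n^P.  This is how samples of a smooth function on a grid of
   mesh 1/n behave, and it is the kind of regularity in the particle index
   that the time derivatives of the positions enjoy. *)
Fixpoint dsmooth (n : R) (P : nat) (a : nat -> R) (B : R) : Prop :=
  match P with
  | O => forall i, Rabs (a i) <= B
  | S P' => (forall i, Rabs (a i) <= B) /\ dsmooth n P' (fdiff a) (B / n)
  end.

Section DiscreteSmoothness.
Variable n : R.
Hypothesis n_pos : 0 < n.

Lemma dsmooth_abs P a B : dsmooth n P a B -> forall i, Rabs (a i) <= B.
Proof. destruct P; simpl; tauto. Qed.

Lemma dsmooth_ge0 P a B : dsmooth n P a B -> 0 <= B.
Proof. intros H; pose proof (dsmooth_abs P a B H 0%nat); pose proof (Rabs_pos (a 0%nat)); lra. Qed.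

Lemma dsmooth_fdiff P a B : dsmooth n (S P) a B -> dsmooth n P (fdiff a) (B / n).
Proof. simpl; tauto. Qed.

Lemma dsmooth_pred P a B : dsmooth n (S P) a B -> dsmooth n P a B.
Proof.
  revert a B; induction P as [|P IH]; intros a B H; [simpl in *; tauto|].
  destruct H as [H1 H2]; split; auto.
Qed.

Lemma dsmooth_ext P a b B : (forall i, a i = b i) -> dsmooth n P a B -> dsmooth n P b B.
Proof.
  revert a b B; induction P as [|P IH]; simpl; intros a b B Hab H.
  - intros i; rewrite <- Hab; auto.
  - destruct H as [H1 H2]; split.
    + intros i; rewrite <- Hab; auto.
    + apply (IH (fdiff a)); auto; intros i; unfold fdiff; rewrite !Hab; auto.
Qed.

Lemma dsmooth_mono P a B B' : B <= B' -> dsmooth n P a B -> dsmooth n P a B'.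
Proof.
  revert a B B'; induction P as [|P IH]; simpl; intros a B B' HB H.
  - intros i; specialize (H i); lra.
  - destruct H as [H1 H2]; split.
    + intros i; specialize (H1 i); lra.
    + apply (IH _ (B / n)); auto.
      apply Rmult_le_compat_r; auto; left; apply Rinv_0_lt_compat; auto.
Qed.

Lemma dsmooth_mono_const P a K K' s :
  0 <= s -> K <= K' -> dsmooth n P a (K * s) -> dsmooth n P a (K' * s).
Proof. intros Hs HK; apply dsmooth_mono; apply Rmult_le_compat_r; auto. Qed.

Lemma dsmooth_plus P a b A B :
  dsmooth n P a A -> dsmooth n P b B -> dsmooth n P (fun i => a i + b i) (A + B).
Proof.
  revert a b A B; induction P as [|P IH]; simpl; intros a b A B Ha Hb.
  - intros i; eapply Rle_trans; [apply Rabs_triang|]; specialize (Ha i); specialize (Hb i); lra.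
  - destruct Ha as [Ha1 Ha2], Hb as [Hb1 Hb2]; split.
    + intros i; eapply Rle_trans; [apply Rabs_triang|].
      specialize (Ha1 i); specialize (Hb1 i); lra.
    + replace ((A + B) / n) with (A / n + B / n) by (unfold Rdiv; ring).
      apply (dsmooth_ext _ (fun i => fdiff a i + fdiff b i)); [intros; unfold fdiff; ring|].
      apply IH; auto.
Qed.

Lemma dsmooth_scal P a A c : dsmooth n P a A -> dsmooth n P (fun i => c * a i) (Rabs c * A).
Proof.
  revert a A; induction P as [|P IH]; simpl; intros a A Ha.
  - intros i; rewrite Rabs_mult; apply Rmult_le_compat_l; auto using Rabs_pos.
  - destruct Ha as [Ha1 Ha2]; split.
    + intros i; rewrite Rabs_mult; apply Rmult_le_compat_l; auto using Rabs_pos.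
    + replace (Rabs c * A / n) with (Rabs c * (A / n)) by (unfold Rdiv; ring).
      apply (dsmooth_ext _ (fun i => c * fdiff a i)); [intros; unfold fdiff; ring|].
      apply IH; auto.
Qed.

Lemma dsmooth_shift P a A c : dsmooth n P a A -> dsmooth n P (fun i => a (i + c)%nat) A.
Proof.
  revert a A; induction P as [|P IH]; simpl; intros a A Ha; auto.
  destruct Ha as [Ha1 Ha2]; split; auto.
  apply (dsmooth_ext _ (fun i => fdiff a (i + c)%nat)); auto.
Qed.

Lemma dsmooth_zero P B : 0 <= B -> dsmooth n P (fun _ => 0) B.
Proof.
  revert B; induction P as [|P IH]; simpl; intros B HB.
  - intros; rewrite Rabs_R0; auto.
  - split; [intros; rewrite Rabs_R0; auto|].
    apply (dsmooth_ext _ (fun _ => 0)); [intros; unfold fdiff; ring|].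
    apply IH; apply Rmult_le_pos; auto; left; apply Rinv_0_lt_compat; auto.
Qed.

Lemma dsmooth_const P c : dsmooth n P (fun _ => c) (Rabs c).
Proof.
  destruct P; simpl; [intros; lra|].
  split; [intros; lra|].
  apply (dsmooth_ext _ (fun _ => 0)); [intros; unfold fdiff; ring|].
  apply dsmooth_zero, Rmult_le_pos; [apply Rabs_pos | left; apply Rinv_0_lt_compat; auto].
Qed.

(* Discrete product rule: fdiff (a b) = fdiff a * b(.+1) + a * fdiff b. *)
Lemma dsmooth_mult P a b A B :
  dsmooth n P a A -> dsmooth n P b B -> dsmooth n P (fun i => a i * b i) (2 ^ P * A * B).
Proof.
  revert a b A B; induction P as [|P IH]; intros a b A B Ha Hb.
  - simpl in *; intros i; rewrite Rabs_mult, Rmult_1_l.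
    apply Rmult_le_compat; auto using Rabs_pos.
  - pose proof (dsmooth_ge0 _ _ _ Ha) as HA; pose proof (dsmooth_ge0 _ _ _ Hb) as HB.
    assert (H2P : 1 <= 2 ^ S P) by (apply pow_R1_Rle; lra).
    split.
    + intros i; rewrite Rabs_mult.
      apply Rle_trans with (A * B).
      * apply Rmult_le_compat; auto using Rabs_pos; eapply dsmooth_abs; eauto.
      * rewrite Rmult_assoc; rewrite <- (Rmult_1_l (A * B)) at 1.
        apply Rmult_le_compat_r; auto; apply Rmult_le_pos; auto.
    + apply (dsmooth_ext _ (fun i => fdiff a i * b (i + 1)%nat + a i * fdiff b i)).
      { intros i; unfold fdiff; replace (i + 1)%nat with (S i) by lia; ring. }
      replace (2 ^ S P * A * B / n) with (2 ^ P * (A / n) * B + 2 ^ P * A * (B / n))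
        by (simpl; field; lra).
      apply dsmooth_plus; apply IH.
      * apply dsmooth_fdiff; auto.
      * apply dsmooth_shift, dsmooth_pred; auto.
      * apply dsmooth_pred; auto.
      * apply dsmooth_fdiff; auto.
Qed.

Lemma dsmooth_sum P (f : nat -> nat -> R) (B : nat -> R) m :
  (forall s, (s <= m)%nat -> dsmooth n P (f s) (B s)) ->
  dsmooth n P (fun i => sum_f_R0 (fun s => f s i) m) (sum_f_R0 B m).
Proof.
  induction m as [|m IH]; intros H; simpl; [apply H; lia|].
  apply (dsmooth_plus _ (fun i => sum_f_R0 (fun s => f s i) m) (f (S m))).
  - apply IH; intros; apply H; lia.
  - apply H; lia.
Qed.

End DiscreteSmoothness.

Definition shift_diff (h : R) (G : nat -> R -> R) (q : nat) (x : R) : R := G q (x + h) - G q x.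

Lemma shift_diff_chain (h : R) (G : nat -> R -> R) :
  (forall q x, derivable_pt_lim (G q) x (G (S q) x)) ->
  forall q x, derivable_pt_lim (shift_diff h G q) x (shift_diff h G (S q) x).
Proof.
  intros HG q x; unfold shift_diff.
  apply (derivable_pt_lim_minus (fun y => G q (y + h)) (G q)); auto.
  rewrite <- (Rmult_1_r (G (S q) (x + h))).
  apply (derivable_pt_lim_comp (fun y => y + h) (G q)); auto.
  rewrite <- (Rplus_0_r 1).
  apply derivable_pt_lim_plus; [apply derivable_pt_lim_id | apply derivable_pt_lim_const].
Qed.

(* Mean value theorem: a step h of the chain costs h times the next bound. *)
Lemma shift_diff_bound (h : R) (G : nat -> R -> R) (M : nat -> R) :
  0 <= h -> (forall q x, derivable_pt_lim (G q) x (G (S q) x)) ->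
  (forall q x, Rabs (G q x) <= M q) ->
  forall q x, Rabs (shift_diff h G q x) <= h * M (S q).
Proof.
  intros Hh HG HM q x; unfold shift_diff.
  destruct (MVT_abs (G q) (G (S q)) x (x + h)) as [c [Hc _]]; [intros; apply HG|].
  rewrite Hc; replace (x + h - x) with h by ring; rewrite (Rabs_pos_eq h), Rmult_comm by auto.
  apply Rmult_le_compat_l; auto.
Qed.

Lemma dsmooth_sample P (G : nat -> R -> R) (M : nat -> R) (n Lc : R) :
  0 < n -> 0 <= Lc ->
  (forall q x, derivable_pt_lim (G q) x (G (S q) x)) ->
  (forall q x, Rabs (G q x) <= M q) ->
  dsmooth n P (fun i => G O (INR i * (Lc / n))) (sum_f_R0 (fun p => Lc ^ p * M p) P).
Proof.
  revert G M; induction P as [|P IH]; intros G M Hn HL HG HM.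
  - simpl; intros i; rewrite Rmult_1_l; auto.
  - assert (HM0 : forall q, 0 <= M q)
      by (intros q; eapply Rle_trans; [apply Rabs_pos | apply (HM q 0)]).
    set (h := Lc / n).
    assert (Hh : 0 <= h) by (apply Rmult_le_pos; auto; left; apply Rinv_0_lt_compat; auto).
    assert (Hterm : forall p, 0 <= Lc ^ p * M p)
      by (intros; apply Rmult_le_pos; auto; apply pow_le; auto).
    split.
    + intros i; eapply Rle_trans; [apply HM|].
      rewrite decomp_sum by lia; simpl pred.
      pose proof (cond_pos_sum (fun p => Lc ^ S p * M (S p)) P (fun p => Hterm (S p))).
      rewrite pow_O; lra.
    + apply (dsmooth_ext _ _ (fun i => shift_diff h G O (INR i * h))).
      { intros i; unfold fdiff, shift_diff; rewrite S_INR; f_equal; f_equal; ring. }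
      apply (dsmooth_mono _ Hn _ _ (sum_f_R0 (fun p => Lc ^ p * (h * M (S p))) P)).
      * rewrite (decomp_sum _ (S P)) by lia; simpl pred.
        assert (Hsum : sum_f_R0 (fun p => Lc ^ p * (h * M (S p))) P =
                       sum_f_R0 (fun p => Lc ^ S p * M (S p)) P / n).
        { unfold Rdiv; rewrite Rmult_comm, scal_sum; apply sum_eq; intros.
          unfold h; simpl; unfold Rdiv; ring. }
        rewrite Hsum; unfold Rdiv; rewrite Rmult_plus_distr_r.
        pose proof (Rmult_le_pos _ _ (Hterm O) (Rlt_le _ _ (Rinv_0_lt_compat _ Hn))); lra.
      * apply IH; auto.
        -- apply shift_diff_chain; auto.
        -- apply shift_diff_bound; auto.
Qed.

(* scale n c a is the size n^(a/2 - 1) c expected of an a-th time derivative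
   (a >= 1) carrying the extra factor c; order 0 carries just c. *)
Definition scale (n c : R) (a : nat) : R :=
  match a with O => c | _ => sqrt n ^ a * c / n end.

Section Scale.
Variable n : R.
Hypothesis n_ge1 : 1 <= n.

Lemma scale_ge0 c a : 0 <= c -> 0 <= scale n c a.
Proof.
  intros Hc; destruct a; simpl; auto.
  apply Rmult_le_pos; [|left; apply Rinv_0_lt_compat; lra].
  apply Rmult_le_pos; auto; apply Rmult_le_pos; [apply sqrt_pos | apply pow_le, sqrt_pos].
Qed.

(* Orders add under products (the loss of one factor 1/n only helps). *)
Lemma scale_mult c1 c2 a b : 0 <= c1 -> 0 <= c2 ->
  scale n c1 a * scale n c2 b <= scale n (c1 * c2) (a + b).
Proof.
  intros H1 H2; assert (Hs : 0 <= sqrt n) by apply sqrt_pos.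
  destruct a as [|a], b as [|b]; simpl scale.
  - lra.
  - right; simpl; field; lra.
  - rewrite Nat.add_0_r; right; field; lra.
  - change (sqrt n ^ S a * c1 / n * (sqrt n ^ S b * c2 / n) <=
            sqrt n ^ (S a + S b) * (c1 * c2) / n).
    rewrite pow_add.
    set (X := sqrt n ^ S a * sqrt n ^ S b * (c1 * c2)).
    assert (HX : 0 <= X) by (unfold X; repeat apply Rmult_le_pos; auto; apply pow_le; auto).
    replace (sqrt n ^ S a * c1 / n * (sqrt n ^ S b * c2 / n)) with (X / n * / n)
      by (unfold X; field; lra).
    apply Rle_trans with (X / n * 1); [|right; ring].
    apply Rmult_le_compat_l.
    + apply Rmult_le_pos; auto; left; apply Rinv_0_lt_compat; lra.
    + rewrite <- Rinv_1; apply Rinv_le_contravar; lra.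
Qed.

Lemma scale_succ b : scale n 1 (S b) <= scale n (sqrt n) b.
Proof.
  assert (Hs : 0 <= sqrt n) by apply sqrt_pos.
  destruct b; simpl; [|right; field; lra].
  rewrite !Rmult_1_r; unfold Rdiv.
  rewrite <- (Rmult_1_r (sqrt n)) at 2; apply Rmult_le_compat_l; auto.
  rewrite <- Rinv_1; apply Rinv_le_contravar; lra.
Qed.

Lemma scale_SS m : scale n 1 (S (S m)) = sqrt n ^ m.
Proof.
  simpl; replace (sqrt n * (sqrt n * sqrt n ^ m) * 1 / n)
    with (sqrt n * sqrt n * sqrt n ^ m / n) by (field; lra).
  rewrite sqrt_sqrt by lra; field; lra.
Qed.

Lemma dsmooth_leibniz P m (u v : nat -> nat -> R) K c1 c2 :
  0 <= c1 -> 0 <= c2 -> 0 <= K ->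
  (forall a, (a <= m)%nat -> dsmooth n P (u a) (K * scale n c1 a)) ->
  (forall b, (b <= m)%nat -> dsmooth n P (v b) (K * scale n c2 b)) ->
  dsmooth n P (fun i => sum_f_R0 (fun a => binom m a * u a i * v (m - a)%nat i) m)
    (2 ^ m * 2 ^ P * K * K * scale n (c1 * c2) m).
Proof.
  intros H1 H2 HK Hu Hv.
  assert (Hn : 0 < n) by lra.
  apply (dsmooth_mono _ Hn _ _ (sum_f_R0 (fun a => Rabs (binom m a) *
           (2 ^ P * (K * scale n c1 a) * (K * scale n c2 (m - a)%nat))) m)).
  - replace (2 ^ m * 2 ^ P * K * K * scale n (c1 * c2) m) with
      (sum_f_R0 (fun a => binom m a * (2 ^ P * (K * K) * scale n (c1 * c2) m)) m)
      by (rewrite <- scal_sum, binom_row_sum; ring).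
    apply sum_Rle; intros a Ha; rewrite Rabs_pos_eq by apply binom_ge0.
    pose proof (scale_mult c1 c2 a (m - a)%nat H1 H2) as HT.
    replace (a + (m - a))%nat with m in HT by lia.
    pose proof (binom_ge0 m a); assert (0 <= 2 ^ P) by (apply pow_le; lra).
    replace (binom m a * (2 ^ P * (K * scale n c1 a) * (K * scale n c2 (m - a))))
      with (binom m a * (2 ^ P * (K * K) * (scale n c1 a * scale n c2 (m - a)))) by ring.
    apply Rmult_le_compat_l; auto; apply Rmult_le_compat_l; auto.
    apply Rmult_le_pos; auto; apply Rmult_le_pos; auto.
  - apply (dsmooth_sum n P (fun a i => binom m a * u a i * v (m - a)%nat i)); intros a Ha.
    apply (dsmooth_ext n _ (fun i => binom m a * (u a i * v (m - a)%nat i))); [intros; ring|].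
    apply dsmooth_scal, dsmooth_mult; [exact Hn | apply Hu | apply Hv]; lia.
Qed.

End Scale.

Lemma finite_bound_choice (Q : nat -> R -> Prop) (m : nat) :
  (forall a K K', K <= K' -> Q a K -> Q a K') ->
  (forall a, (a <= m)%nat -> exists K, 0 <= K /\ Q a K) ->
  exists K, 0 <= K /\ forall a, (a <= m)%nat -> Q a K.
Proof.
  intros Hmono; induction m as [|m IH]; intros H.
  - destruct (H 0%nat (le_n 0)) as [K [HK HQ]]; exists K; split; auto.
    intros a Ha; replace a with 0%nat by lia; auto.
  - destruct IH as [K1 [HK1 HQ1]]; [intros; apply H; lia|].
    destruct (H (S m) (le_n _)) as [K2 [HK2 HQ2]].
    exists (K1 + K2); split; [lra|]; intros a Ha.
    destruct (Nat.eq_dec a (S m)) as [->|Hne].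
    + apply (Hmono _ K2); auto; lra.
    + apply (Hmono _ K1); [lra|]; apply HQ1; lia.
Qed.

Lemma mod_succ (N i : nat) : N <> 0%nat ->
  S i mod N = if Nat.eqb (S (i mod N)) N then 0%nat else S (i mod N).
Proof.
  intros HN; pose proof (Nat.div_mod_eq i N); pose proof (Nat.mod_upper_bound i N HN).
  destruct (Nat.eqb_spec (S (i mod N)) N);
    symmetry; [apply (Nat.mod_unique _ _ (S (i / N))) | apply (Nat.mod_unique _ _ (i / N))]; lia.
Qed.

Lemma mod_pred (N i : nat) : N <> 0%nat ->
  (i + N - 1) mod N = if Nat.eqb (i mod N) 0 then (N - 1)%nat else (i mod N - 1)%nat.
Proof.
  intros HN; pose proof (Nat.div_mod_eq i N); pose proof (Nat.mod_upper_bound i N HN).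
  destruct (Nat.eqb_spec (i mod N) 0);
    symmetry; [apply (Nat.mod_unique _ _ (i / N)) | apply (Nat.mod_unique _ _ (S (i / N)))]; lia.
Qed.

Lemma mod_add_self (N i : nat) : (i + N) mod N = i mod N.
Proof. rewrite <- (Nat.mul_1_l N) at 1; apply Nat.Div0.mod_add. Qed.

Lemma INR_ge1 (N : nat) : (2 <= N)%nat -> 1 <= INR N.
Proof. intros HN; apply (le_INR 1); lia. Qed.

Section Dynamics.
Variable L : R.
Variable F : R -> R.
Hypothesis HL : 0 < L.
Hypothesis Hper : periodic L F.
Hypothesis Han : real_analytic F.

(* The derivatives of F: a chain of L-periodic, hence bounded, functions. *)
Definition dF (q : nat) : R -> R := Derive_n F q.

Lemma dF_chain q x : derivable_pt_lim (dF q) x (dF (S q) x).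
Proof. apply analytic_deriv_chain; auto. Qed.

Lemma dF_periodic q : periodic L (dF q).
Proof.
  induction q as [|q IH]; [apply Hper|].
  apply (periodic_derive (dF q)); auto; apply dF_chain.
Qed.

Lemma dF_bounded q : exists M, forall x, Rabs (dF q x) <= M.
Proof.
  apply (periodic_bounded _ L HL (dF_periodic q)).
  intros x; apply derivable_continuous_pt; exists (dF (S q) x); apply dF_chain.
Qed.

Definition supF (q : nat) : R := proj1_sig (constructive_indefinite_description _ (dF_bounded q)).

Lemma supF_spec q x : Rabs (dF q x) <= supF q.
Proof. unfold supF; destruct (constructive_indefinite_description _ _); simpl; auto. Qed.

Lemma supF_ge0 q : 0 <= supF q.
Proof. eapply Rle_trans; [apply Rabs_pos | apply (supF_spec q 0)]. Qed.

(* Objects attached to a solution D with N particles, extended N-periodically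
   in the particle index i (positions themselves are not periodic, but their
   time derivatives, the gaps and the forces are).
   xder N D m i is the m-th time derivative of x_i at time 0. *)
Definition xder (N : nat) (D : nat -> nat -> R -> R) (m i : nat) : R := D m (i mod N) 0.

Definition gap (N : nat) (D : nat -> nat -> R -> R) (i : nat) (t : R) : R :=
  D 0%nat (S i mod N) t - D 0%nat (i mod N) t + (if Nat.eqb (S (i mod N)) N then L else 0).

Definition repulsion (N : nat) (D : nat -> nat -> R -> R) (i : nat) (t : R) : R :=
  / (gap N D i t * gap N D i t).

Definition force (N : nat) (D : nat -> nat -> R -> R) (q i : nat) (t : R) : R :=
  dF q (D 0%nat (i mod N) t).

Definition gder N D (m i : nat) : R := Derive_n (gap N D i) m 0.
Definition sqgder N D (m i : nat) : R := Derive_n (fun t => gap N D i t * gap N D i t) m 0.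
Definition repder N D (m i : nat) : R := Derive_n (repulsion N D i) m 0.
Definition forceder N D (q m i : nat) : R := Derive_n (force N D q i) m 0.

Lemma repder_periodic N D m i : N <> 0%nat -> repder N D m (i + N) = repder N D m i.
Proof.
  intros HN; unfold repder, repulsion, gap.
  change (S (i + N)) with (S i + N)%nat; rewrite !mod_add_self; auto.
Qed.

Section Solution.
Variables (N : nat) (eps : R) (D : nat -> nat -> R -> R).
Hypothesis HN : (2 <= N)%nat.
Hypothesis Hs : is_solution N L F eps D.

Lemma N_nz : N <> 0%nat. Proof. lia. Qed.
Lemma INR_N_pos : 0 < INR N. Proof. apply lt_0_INR; lia. Qed.
Lemma mod_lt i : (i mod N < N)%nat. Proof. apply Nat.mod_upper_bound, N_nz. Qed.
Lemma in0 : inI eps 0. Proof. destruct Hs as [He _]; unfold inI; lra. Qed.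

Lemma pos_chain j n : (j < N)%nat -> deriv_chain eps n (fun k => D k j).
Proof. intros Hj k t Hk Ht; destruct Hs as [_ [Hd _]]; apply Hd; auto. Qed.

Lemma pos_smooth j : (j < N)%nat -> Cinf eps (D 0%nat j).
Proof. intros Hj; apply (Cinf_of_chain eps (fun k => D k j)); intros; apply pos_chain; auto. Qed.

Lemma vel_smooth j : (j < N)%nat -> Cinf eps (D 1%nat j).
Proof.
  intros Hj; apply (Cinf_of_chain eps (fun k => D (S k) j)).
  intros n k t Hk Ht; apply (pos_chain j (S n)); auto; lia.
Qed.

Lemma pos_Derive_n j k t : (j < N)%nat -> inI eps t -> Derive_n (D 0%nat j) k t = D k j t.
Proof.
  intros Hj Ht; apply (Derive_n_chain eps k (fun k => D k j)); auto; apply pos_chain; auto.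
Qed.

Lemma vel_Derive_n j k t : (j < N)%nat -> inI eps t -> Derive_n (D 1%nat j) k t = D (S k) j t.
Proof.
  intros Hj Ht; apply (Derive_n_chain eps k (fun k => D (S k) j)); auto.
  intros k' y Hk Hy; apply (pos_chain j (S k)); auto; lia.
Qed.

Lemma pos_init j : (j < N)%nat -> D 0%nat j 0 = INR j * L / INR N.
Proof. destruct Hs as [_ [_ [_ [_ [H0 _]]]]]; auto. Qed.

Lemma vel_init i : xder N D 1 i = 0.
Proof. destruct Hs as [_ [_ [_ [_ [_ H1]]]]]; apply H1, mod_lt. Qed.

Lemma gap_right i t : gap N D i t = right_gap N L (fun m => D 0%nat m t) (i mod N).
Proof. unfold gap, right_gap; rewrite (mod_succ N i N_nz); destruct (Nat.eqb _ N); ring. Qed.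

Lemma gap_left i t : gap N D (i + N - 1) t = left_gap N L (fun m => D 0%nat m t) (i mod N).
Proof.
  unfold gap, left_gap.
  replace (S (i + N - 1)) with (i + N)%nat by lia.
  rewrite mod_add_self, (mod_pred N i N_nz); pose proof (mod_lt i).
  destruct (Nat.eqb_spec (i mod N) 0) as [E|E].
  - rewrite E; replace (S (N - 1)) with N by lia; rewrite Nat.eqb_refl; ring.
  - replace (S (i mod N - 1)) with (i mod N) by lia.
    destruct (Nat.eqb_spec (i mod N) N); [lia|].
    destruct (i mod N) as [|k]; [lia|]; replace (S k - 1)%nat with k by lia; ring.
Qed.

Lemma gap_pos i t : inI eps t -> 0 < gap N D i t.
Proof. intros Ht; rewrite gap_right; destruct Hs as [_ [_ [Hp _]]]; apply Hp, Ht; apply mod_lt. Qed.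

Lemma gap_smooth i : Cinf eps (gap N D i).
Proof.
  intros n; apply Cn_plus; [apply Cn_minus|apply Cn_const]; apply pos_smooth, mod_lt.
Qed.

Lemma sqgap_smooth i : Cinf eps (fun t => gap N D i t * gap N D i t).
Proof. intros n; apply Cn_mult; apply gap_smooth. Qed.

Lemma repulsion_smooth i : Cinf eps (repulsion N D i).
Proof.
  intros n; apply Cn_inv; [|apply sqgap_smooth].
  intros t Ht; pose proof (gap_pos i t Ht); nra.
Qed.

Lemma force_smooth q i : Cinf eps (force N D q i).
Proof. intros n; apply (Cn_comp eps n dF); [apply dF_chain | apply pos_smooth, mod_lt]. Qed.

Lemma gder_0 i : gder N D 0 i = L / INR N.
Proof.
  unfold gder; simpl; unfold gap.
  pose proof INR_N_pos; rewrite !pos_init by apply mod_lt.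
  rewrite (mod_succ N i N_nz).
  destruct (Nat.eqb_spec (S (i mod N)) N) as [E|E].
  - replace (INR (i mod N)) with (INR N - 1)
      by (apply (f_equal INR) in E; rewrite S_INR in E; lra).
    simpl; field; lra.
  - rewrite S_INR; field; lra.
Qed.

Lemma gder_S m i : gder N D (S m) i = fdiff (xder N D (S m)) i.
Proof.
  unfold gder, gap, xder, fdiff.
  rewrite Derive_n_plus_inI with (e := eps), Derive_n_minus_inI with (e := eps), Derive_n_const,
    !pos_Derive_n; try ring; try apply mod_lt; try apply in0; try apply pos_smooth, mod_lt.
  - intros n; apply Cn_minus; apply pos_smooth, mod_lt.
  - intros n; apply Cn_const.
Qed.

Lemma sqgder_leibniz m i :
  sqgder N D m i = sum_f_R0 (fun a => binom m a * gder N D a i * gder N D (m - a) i) m.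
Proof. apply Derive_n_mult_inI with (e := eps); auto using gap_smooth, in0. Qed.

Lemma sqgder_0 i : sqgder N D 0 i = L / INR N * (L / INR N).
Proof.
  pose proof (gder_0 i) as H; unfold gder in H; unfold sqgder.
  simpl in *; rewrite H; auto.
Qed.

Lemma repder_0 i : repder N D 0 i = / (L / INR N * (L / INR N)).
Proof.
  pose proof (sqgder_0 i) as H; unfold sqgder in H; unfold repder, repulsion.
  simpl in *; rewrite H; auto.
Qed.

Lemma sqgap0_pos : 0 < L / INR N * (L / INR N).
Proof. pose proof INR_N_pos; assert (0 < L / INR N) by (apply Rdiv_lt_0_compat; auto); nra. Qed.

(* Differentiating gap^2 * repulsion = 1. *)
Lemma repder_relation m i : (1 <= m)%nat ->
  sum_f_R0 (fun a => binom m a * sqgder N D a i * repder N D (m - a) i) m = 0.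
Proof.
  intros Hm; unfold sqgder, repder.
  rewrite <- (Derive_n_mult_inI eps); auto using sqgap_smooth, repulsion_smooth, in0.
  rewrite (Derive_n_ext_inI eps _ (fun _ => 1)); auto using in0.
  - destruct m; [lia | apply Derive_n_const].
  - intros y Hy; unfold repulsion; pose proof (gap_pos i y Hy); field; lra.
Qed.

Definition repder_below (m b i : nat) : R := if Nat.ltb b m then repder N D b i else 0.

Lemma repder_recursion m i : (1 <= m)%nat ->
  repder N D m i = - / (L / INR N * (L / INR N)) *
    sum_f_R0 (fun a => binom m a * sqgder N D a i * repder_below m (m - a) i) m.
Proof.
  intros Hm; pose proof (repder_relation m i Hm) as Hrel.
  pose proof sqgap0_pos as Hq.
  destruct m as [|m']; [lia|].
  rewrite (decomp_sum _ (S m')) in Hrel by lia; rewrite (decomp_sum _ (S m')) by lia.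
  simpl pred in *.
  rewrite Nat.sub_0_r in *; unfold repder_below at 1; rewrite Nat.ltb_irrefl, sqgder_0 in *.
  replace (sum_f_R0 (fun k => binom (S m') (S k) * sqgder N D (S k) i *
                              repder_below (S m') (S m' - S k) i) m')
    with (sum_f_R0 (fun k => binom (S m') (S k) * sqgder N D (S k) i *
                             repder N D (S m' - S k) i) m').
  2:{ apply sum_eq; intros k Hk; unfold repder_below.
      destruct (Nat.ltb_spec (S m' - S k) (S m')); auto; lia. }
  rewrite binom_n0 in *.
  set (q := L / INR N * (L / INR N)) in *.
  set (s := sum_f_R0 _ m') in *.
  apply Rmult_eq_reg_l with q; [|lra].
  replace (q * (- / q * (1 * q * 0 + s))) with (- s) by (field; lra).
  lra.
Qed.

(* Chain rule: d/dt dF q (x_i) = dF (q+1) (x_i) * v_i, expanded by Leibniz. *)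
Lemma forceder_S q a i : forceder N D q (S a) i =
  sum_f_R0 (fun s => binom a s * forceder N D (S q) s i * xder N D (S (a - s)) i) a.
Proof.
  unfold forceder, xder; pose proof (mod_lt i) as Hj.
  replace (S a) with (a + 1)%nat by lia; rewrite <- Derive_n_comp.
  rewrite (Derive_n_ext_inI eps (Derive_n (force N D q i) 1)
    (fun t => force N D (S q) i t * D 1%nat (i mod N) t)); auto using in0.
  - rewrite Derive_n_mult_inI with (e := eps); auto using force_smooth, vel_smooth, in0.
    apply sum_eq; intros s Hs'; rewrite vel_Derive_n; auto using in0.
  - intros y Hy; simpl; apply is_derive_unique, is_derive_Reals.
    apply (derivable_pt_lim_comp (D 0%nat (i mod N)) (dF q)); [|apply dF_chain].
    destruct Hs as [_ [Hd _]]; apply Hd; auto.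
Qed.

Lemma forceder_0 q i : forceder N D q 0 i = dF q (INR i * (L / INR N)).
Proof.
  unfold forceder, force; simpl; rewrite pos_init by apply mod_lt.
  pose proof (Nat.div_mod_eq i N) as E; pose proof INR_N_pos.
  rewrite <- (periodic_Z _ L (dF_periodic q) (Z.of_nat (i / N))), <- INR_IZR_INZ.
  f_equal; rewrite E at 3; rewrite plus_INR, mult_INR; field; lra.
Qed.

Lemma xder_motion m i : xder N D (S (S m)) i =
  repder N D m (i + N - 1) - repder N D m i + forceder N D 0 m i.
Proof.
  unfold xder, repder, forceder; pose proof (mod_lt i) as Hj.
  rewrite <- pos_Derive_n by auto using in0.
  replace (S (S m)) with (m + 2)%nat by lia; rewrite <- Derive_n_comp.
  rewrite (Derive_n_ext_inI eps (Derive_n (D 0%nat (i mod N)) 2)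
    (fun t => (repulsion N D (i + N - 1) t - repulsion N D i t) + force N D 0 i t)); auto using in0.
  - rewrite Derive_n_plus_inI with (e := eps), Derive_n_minus_inI with (e := eps);
      auto using repulsion_smooth, force_smooth, in0.
    intros n; apply Cn_minus; apply repulsion_smooth.
  - intros y Hy; rewrite pos_Derive_n by auto.
    destruct Hs as [_ [_ [_ [Heq _]]]]; rewrite Heq by auto.
    unfold repulsion, force; rewrite gap_left, gap_right; simpl; rewrite !Rmult_1_r; auto.
Qed.

End Solution.

Definition ubound (P : nat) (seqs : nat -> (nat -> nat -> R -> R) -> nat -> R)
    (size : R -> R) : Prop :=
  exists K, 0 <= K /\ forall N eps D, (2 <= N)%nat -> is_solution N L F eps D ->
    dsmooth (INR N) P (seqs N D) (K * size (INR N)).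

Lemma ubound_choice P m (seqs : nat -> nat -> (nat -> nat -> R -> R) -> nat -> R) (c : R -> R) :
  (forall n, 1 <= n -> 0 <= c n) ->
  (forall a, (a <= m)%nat -> ubound P (seqs a) (fun n => scale n (c n) a)) ->
  exists K, 0 <= K /\ forall N eps D, (2 <= N)%nat -> is_solution N L F eps D ->
    forall a, (a <= m)%nat -> dsmooth (INR N) P (seqs a N D) (K * scale (INR N) (c (INR N)) a).
Proof.
  intros Hc H.
  destruct (finite_bound_choice (fun a K => forall N eps D, (2 <= N)%nat ->
    is_solution N L F eps D -> dsmooth (INR N) P (seqs a N D) (K * scale (INR N) (c (INR N)) a)) m)
    as [K [HK HQ]].
  - intros a K K' HKK' HQ N eps D HN Hs.
    pose proof (INR_ge1 N HN).
    apply (dsmooth_mono_const _ (INR_N_pos N HN) _ _ K); auto; [apply scale_ge0; auto|].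
    apply (HQ N eps D); auto.
  - exact H.
  - exists K; split; auto; intros N eps D HN Hs a Ha; apply (HQ a Ha N eps D); auto.
Qed.

Definition positions_bounded (M : nat) : Prop :=
  forall P m, (1 <= m <= M)%nat -> ubound P (fun N D => xder N D m) (fun n => scale n 1 m).

Section Bounds.
Variable M : nat.
Hypothesis HX : positions_bounded M.

(* Gaps are differences of positions: one factor 1/n more. *)
Lemma gder_ubound P a : (a <= M)%nat -> ubound P (fun N D => gder N D a) (fun n => scale n (/ n) a).
Proof.
  intros Ha; destruct a as [|a].
  - exists L; split; [lra|]; intros N eps D HN Hs; pose proof (INR_N_pos N HN).
    apply (dsmooth_ext _ _ (fun _ => L / INR N)); [intros; rewrite (gder_0 N eps D HN Hs); auto|].
    simpl scale; replace (L * / INR N) with (Rabs (L / INR N))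
      by (rewrite Rabs_pos_eq; auto; apply Rlt_le, Rdiv_lt_0_compat; auto).
    apply dsmooth_const; auto.
  - destruct (HX (S P) (S a)) as [K [HK HB]]; [lia|]; exists K; split; auto.
    intros N eps D HN Hs; pose proof (INR_N_pos N HN).
    apply (dsmooth_ext _ _ (fdiff (xder N D (S a))));
      [intros; rewrite (gder_S N eps D HN Hs); auto|].
    apply (dsmooth_mono _ H _ _ (K * scale (INR N) 1 (S a) / INR N)).
    + right; unfold scale; field; lra.
    + apply dsmooth_fdiff, (HB N eps D); auto.
Qed.

Lemma sqgder_ubound P m : (m <= M)%nat ->
  ubound P (fun N D => sqgder N D m) (fun n => scale n (/ n * / n) m).
Proof.
  intros Hm.
  destruct (ubound_choice P m (fun a N D => gder N D a) (fun n => / n)) as [K [HK HB]].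
  { intros n Hn; left; apply Rinv_0_lt_compat; lra. }
  { intros a Ha; apply gder_ubound; lia. }
  exists (2 ^ m * 2 ^ P * K * K); split; [repeat apply Rmult_le_pos; auto; apply pow_le; lra|].
  intros N eps D HN Hs; pose proof (INR_ge1 N HN).
  apply (dsmooth_ext _ _
    (fun i => sum_f_R0 (fun a => binom m a * gder N D a i * gder N D (m - a) i) m));
    [intros; rewrite (sqgder_leibniz N eps D HN Hs); auto|].
  assert (0 <= / INR N) by (left; apply Rinv_0_lt_compat; lra).
  apply dsmooth_leibniz; auto; intros a Ha; apply (HB N eps D HN Hs a Ha).
Qed.

Lemma repder0_ubound P : ubound P (fun N D => repder N D 0) (fun n => n * n).
Proof.
  exists (/ (L * L)); split; [left; apply Rinv_0_lt_compat; nra|].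
  intros N eps D HN Hs; pose proof (INR_N_pos N HN); pose proof (sqgap0_pos N HN).
  apply (dsmooth_ext _ _ (fun _ => / (L / INR N * (L / INR N))));
    [intros; rewrite (repder_0 N eps D HN Hs); auto|].
  replace (/ (L * L) * (INR N * INR N)) with (Rabs (/ (L / INR N * (L / INR N)))).
  - apply dsmooth_const; auto.
  - rewrite Rabs_pos_eq by (left; apply Rinv_0_lt_compat; auto); field; split; lra.
Qed.

(* The repulsion 1/gap^2 has size n^2: solve gap^2 * repulsion = 1 order by
   order (repder_recursion), bounding the Leibniz sum by the lower orders. *)
Lemma repder_ubound P m : (m <= M)%nat ->
  ubound P (fun N D => repder N D m) (fun n => scale n (n * n) m).
Proof.
  induction m as [m IH] using lt_wf_ind; intros Hm.
  destruct m as [|m']; [apply repder0_ubound|]; set (m := S m').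
  destruct (ubound_choice P m (fun a N D => sqgder N D a) (fun n => / n * / n)) as [K1 [HK1 HB1]].
  { intros n Hn; assert (0 < / n) by (apply Rinv_0_lt_compat; lra); nra. }
  { intros a Ha; apply sqgder_ubound; lia. }
  destruct (ubound_choice P m (fun b N D => repder_below N D m b) (fun n => n * n))
    as [K2 [HK2 HB2]]; [intros n Hn; nra| |].
  { intros b Hb; unfold repder_below; destruct (Nat.ltb_spec b m) as [Hlt|Hge].
    - apply IH; lia.
    - exists 0; split; [lra|]; intros N eps D HN Hs.
      rewrite Rmult_0_l; apply dsmooth_zero; [apply INR_N_pos|]; auto; lra. }
  set (K := K1 + K2).
  exists (2 ^ m * 2 ^ P * K * K / (L * L)); split.
  { apply Rdiv_le_0_compat; [|nra].
    repeat apply Rmult_le_pos; unfold K; try lra; apply pow_le; lra. }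
  intros N eps D HN Hs; pose proof (INR_ge1 N HN); pose proof (sqgap0_pos N HN).
  pose proof (INR_N_pos N HN) as Hn0; set (n := INR N) in *.
  assert (0 < / n) by (apply Rinv_0_lt_compat; lra).
  assert (Hsum : dsmooth n P
    (fun i => sum_f_R0 (fun a => binom m a * sqgder N D a i * repder_below N D m (m - a) i) m)
    (2 ^ m * 2 ^ P * K * K * scale n (/ n * / n * (n * n)) m)).
  { apply dsmooth_leibniz; auto; try (unfold K; lra); try nra.
    - intros a Ha; apply (dsmooth_mono_const _ Hn0 _ _ K1);
        [apply scale_ge0; auto; nra | unfold K; lra|].
      apply (HB1 N eps D HN Hs a Ha).
    - intros b Hb; apply (dsmooth_mono_const _ Hn0 _ _ K2);
        [apply scale_ge0; auto; nra | unfold K; lra|].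
      apply (HB2 N eps D HN Hs b Hb). }
  apply (dsmooth_ext _ _ _ _ _ (fun i => eq_sym (repder_recursion N eps D HN Hs m i ltac:(lia)))).
  apply (dsmooth_mono _ Hn0 _ _
    (Rabs (- / (L / n * (L / n))) * (2 ^ m * 2 ^ P * K * K * scale n (/ n * / n * (n * n)) m))).
  - rewrite Rabs_Ropp, Rabs_pos_eq by (left; apply Rinv_0_lt_compat; auto).
    right; unfold m, scale; field; split; lra.
  - apply dsmooth_scal; auto.
Qed.

Lemma forceder0_ubound P q : ubound P (fun N D => forceder N D q 0) (fun n => scale n 1 0).
Proof.
  exists (sum_f_R0 (fun p => L ^ p * supF (q + p)) P); split.
  { apply cond_pos_sum; intros; apply Rmult_le_pos; [apply pow_le; lra | apply supF_ge0]. }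
  intros N eps D HN Hs.
  apply (dsmooth_ext _ _ (fun i => dF (q + 0) (INR i * (L / INR N))));
    [intros i; rewrite (forceder_0 N eps D HN Hs), Nat.add_0_r; auto|].
  simpl scale; rewrite Rmult_1_r.
  apply (dsmooth_sample P (fun k => dF (q + k))); auto using INR_N_pos; try lra.
  - intros k x; rewrite Nat.add_succ_r; apply dF_chain.
  - intros k x; apply supF_spec.
Qed.

Lemma forceder_ubound P a : (a <= M)%nat -> forall q,
  ubound P (fun N D => forceder N D q a) (fun n => scale n 1 a).
Proof.
  induction a as [a IH] using lt_wf_ind; intros Ha q.
  destruct a as [|[|a']]; [apply forceder0_ubound| |].
  - (* order 1 vanishes with the initial velocities *)
    exists 0; split; [lra|]; intros N eps D HN Hs.
    apply (dsmooth_ext _ _ (fun _ => 0)).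
    { intros i; rewrite (forceder_S N eps D HN Hs); simpl; rewrite (vel_init N eps D HN Hs); ring. }
    apply dsmooth_zero; [apply INR_N_pos; auto | lra].
  - set (a := S a').
    destruct (ubound_choice P a (fun s N D => forceder N D (S q) s) (fun _ => 1))
      as [K1 [HK1 HB1]]; [intros; lra | intros s Hs'; apply IH; lia|].
    destruct (ubound_choice P a (fun b N D => xder N D (S b)) (fun n => sqrt n)) as [K2 [HK2 HB2]].
    { intros; apply sqrt_pos. }
    { intros b Hb; destruct (HX P (S b)) as [K [HK HB]]; [lia|]; exists K; split; auto.
      intros N eps D HN Hs; pose proof (INR_ge1 N HN).
      apply (dsmooth_mono _ (INR_N_pos N HN) _ _ (K * scale (INR N) 1 (S b))).
      + apply Rmult_le_compat_l; auto; apply scale_succ; auto.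
      + apply (HB N eps D HN Hs). }
    set (K := K1 + K2).
    exists (2 ^ a * 2 ^ P * K * K); split.
    { repeat apply Rmult_le_pos; unfold K; try lra; apply pow_le; lra. }
    intros N eps D HN Hs; pose proof (INR_ge1 N HN); pose proof (INR_N_pos N HN) as Hn0.
    apply (dsmooth_ext _ _ _ _ _ (fun i => eq_sym (forceder_S N eps D HN Hs q a i))).
    apply (dsmooth_mono _ Hn0 _ _ (2 ^ a * 2 ^ P * K * K * scale (INR N) (1 * sqrt (INR N)) a)).
    { right; unfold a, scale; simpl; field; lra. }
    apply (dsmooth_leibniz (INR N) (INR_ge1 N HN) P a (fun s => forceder N D (S q) s)
      (fun b => xder N D (S b)) K 1 (sqrt (INR N))); try apply sqrt_pos; try (unfold K; lra).
    + intros s Hs'; apply (dsmooth_mono_const _ Hn0 _ _ K1);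
        [apply scale_ge0; auto; lra | unfold K; lra|].
      apply (HB1 N eps D HN Hs s Hs').
    + intros b Hb; apply (dsmooth_mono_const _ Hn0 _ _ K2);
        [apply scale_ge0; auto; apply sqrt_pos | unfold K; lra|].
      apply (HB2 N eps D HN Hs b Hb).
Qed.

Lemma accel_ubound P m : (m <= M)%nat ->
  ubound P (fun N D => xder N D (S (S m))) (fun n => scale n 1 (S (S m))).
Proof.
  intros Hm.
  destruct (repder_ubound (S P) m) as [K1 [HK1 HB1]]; [lia|].
  destruct (forceder_ubound P m ltac:(lia) 0%nat) as [K2 [HK2 HB2]].
  exists (K1 + K2); split; [lra|]; intros N eps D HN Hs.
  pose proof (INR_ge1 N HN) as Hn1; pose proof (INR_N_pos N HN) as Hn0.
  rewrite scale_SS by auto.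
  assert (HsN : 0 <= sqrt (INR N) ^ m) by (apply pow_le, sqrt_pos).
  destruct m as [|m].
  - (* the repulsions are constant in i at order 0 and cancel *)
    apply (dsmooth_ext _ _ (fun i => forceder N D 0 0 i)).
    { intros i; rewrite (xder_motion N eps D HN Hs), !(repder_0 N eps D HN Hs); ring. }
    apply (dsmooth_mono _ Hn0 _ _ (K2 * scale (INR N) 1 0)); [simpl; lra|].
    apply (HB2 N eps D HN Hs).
  - (* the difference of neighbouring repulsions gains a factor 1/n *)
    apply (dsmooth_ext _ _
      (fun i => -1 * fdiff (repder N D (S m)) (i + (N - 1)) + forceder N D 0 (S m) i)).
    { intros i; rewrite (xder_motion N eps D HN Hs); unfold fdiff.
      replace (S (i + (N - 1))) with (i + N)%nat by lia.
      rewrite repder_periodic by lia; replace (i + (N - 1))%nat with (i + N - 1)%nat by lia; ring. }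
    apply (dsmooth_mono _ Hn0 _ _ (Rabs (-1) * (K1 * scale (INR N) (INR N * INR N) (S m) / INR N) +
        K2 * scale (INR N) 1 (S m))).
    + replace (Rabs (-1)) with 1 by (rewrite Rabs_left; lra); unfold scale.
      set (s := sqrt (INR N) ^ S m) in *.
      assert (s / INR N <= s).
      { unfold Rdiv; rewrite <- (Rmult_1_r s) at 2; apply Rmult_le_compat_l; auto.
        rewrite <- Rinv_1; apply Rinv_le_contravar; lra. }
      replace (1 * (K1 * (s * (INR N * INR N) / INR N) / INR N) + K2 * (s * 1 / INR N))
        with (K1 * s + K2 * (s / INR N)) by (field; lra).
      nra.
    + apply dsmooth_plus; [|apply (HB2 N eps D HN Hs)].
      apply dsmooth_scal, (dsmooth_shift _ _ (fdiff (repder N D (S m)))), dsmooth_fdiff; auto.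
      apply (HB1 N eps D HN Hs).
Qed.

End Bounds.

(* Induction step on the maximal order: order 1 is the (zero) initial
   velocity, orders >= 2 come from the equation of motion. *)
Lemma positions_bounded_S M : positions_bounded M -> positions_bounded (S M).
Proof.
  intros HX P m Hm.
  destruct (Nat.le_gt_cases m M) as [Hle|Hgt]; [apply HX; lia|].
  replace m with (S M) by lia.
  destruct M as [|M].
  -
    exists 0; split; [lra|]; intros N eps D HN Hs.
    apply (dsmooth_ext _ _ (fun _ => 0)); [intros; rewrite (vel_init N eps D HN Hs); auto|].
    apply dsmooth_zero; [apply INR_N_pos | lra]; auto.
  - apply (accel_ubound (S M) HX); lia.
Qed.

Lemma positions_bounded_all M : positions_bounded M.
Proof. induction M; [intros P m Hm; lia | apply positions_bounded_S; auto]. Qed.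

End Dynamics.

Theorem theorem1 (L : R) (F : R -> R) (HL : 0 < L)
    (Hper : periodic L F) (Han : real_analytic F) :
  forall j : nat, (1 <= j)%nat ->
  exists b : R,
    forall N : nat, (2 <= N)%nat ->
    forall (eps : R) (D : nat -> nat -> R -> R),
      is_solution N L F eps D ->
      forall i : nat, (i < N)%nat ->
        Rabs (coeff D i j) < b * Rpower (INR N) ((INR j - 1) / 2).
Proof.
  intros j Hj.
  destruct (positions_bounded_all L F HL Hper Han (S j) 0%nat (S j)) as [K [HK HB]]; [lia|].
  exists (K + 1); intros N HN eps D Hs i Hi.
  pose proof (INR_ge1 N HN) as Hn1.
  pose proof (dsmooth_abs _ _ _ _ (HB N eps D HN Hs) i) as Hx.
  destruct j as [|j]; [lia|].
  unfold xder in Hx; rewrite Nat.mod_small, scale_SS in Hx by auto.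
  assert (Hpow : Rpower (INR N) ((INR (S j) - 1) / 2) = sqrt (INR N) ^ j).
  { rewrite S_INR; replace ((INR j + 1 - 1) / 2) with (/ 2 * INR j) by field.
    rewrite <- Rpower_mult, Rpower_sqrt, Rpower_pow by (try apply sqrt_lt_R0; lra); auto. }
  assert (Hpos : 0 < sqrt (INR N) ^ j) by (apply pow_lt, sqrt_lt_R0; lra).
  assert (Hfact : 1 <= INR (fact (S j))) by (apply (le_INR 1), lt_O_fact).
  assert (Hcoeff : Rabs (coeff D i (S j)) <= Rabs (D (S (S j)) i 0)).
  { unfold coeff, Rdiv; rewrite Rabs_mult, Rabs_inv, (Rabs_pos_eq (INR _)) by lra.
    rewrite <- (Rmult_1_r (Rabs (D _ i 0))) at 2.
    apply Rmult_le_compat_l; [apply Rabs_pos|].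
    rewrite <- Rinv_1; apply Rinv_le_contravar; lra. }
  rewrite Hpow; nra.
Qed.
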